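(* Consider a networked cyber-physical system, as described in the context, executing the team-triggered law described in the context with dwell times $T_{d,self},T_{d,event}>0$, where the underlying controller $u^{**}:\prod_{j=1}^N \mathbb{P}^{cc}(\mathcal{X}_j)\to\mathbb{R}^m$ is continuous with respect to the Hausdorff distance, is distributed over $\mathcal{G}_{comm}$, and satisfies, for all $x\in\mathcal{X}\setminus D$: (a) $\nabla_i V(x)\big(A_i x_i + B_i u^{**}_i(\{x\})\big)\le 0$ for every $i$, and (b) $\sum_{i=1}^N \nabla_i V(x)\big(A_i x_i + B_i u^{**}_i(\{x\})\big)<0$. Then the network executions do not exhibit Zeno behavior: in any bounded time interval, each agent receives only finitely many messages and its control law switches only finitely many times.
   Context: Networked cyber-physical system: $N$ agents communicate over an undirected graph $\mathcal{G}_{comm}$ on $\{1,\dots,N\}$; $\mathcal{N}(i)$ is the set of neighbors of $i$. Agent $i$ has state $x_i$ in a closed set $\mathcal{X}_i\subset\mathbb{R}^{n_i}$, linear dynamics $\dot x_i = A_i x_i + B_i u_i$ with $u_i$ in a closed set $\mathcal{U}_i\subset\mathbb{R}^{m_i}$, has access to its own state at all times, and has a safe-mode controller $u^{sf}_i:\mathcal{X}_i\to\mathcal{U}_i$ with $A_i x_i + B_i u^{sf}_i(x_i)=0$ for all $x_i$. The network state is $x=(x_1,\dots,x_N)\in\mathcal{X}=\prod_i\mathcal{X}_i$, $m=\sum_i m_i$. $V:\mathcal{X}\to\mathbb{R}$ is continuously differentiable and bounded below, $D$ is its set of minimizers, and $\nabla_i V$ (the gradient with respect to $x_i$) depends only on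 $x_i$ and $x_j$, $j\in\mathcal{N}(i)$. $\mathbb{P}^{cc}(S)$ denotes the compact connected subsets of $S$. ''Distributed over $\mathcal{G}_{comm}$'' means the $i$-th component $u^{**}_i$ depends only on the sets associated with $i$ and its neighbors. The reachable set is $\mathcal{R}_i(s,y)=\{e^{A_i s}y+\int_0^s e^{A_i(s-\tau)}B_i u_i(\tau)d\tau : u_i:[0,s]\to\mathcal{U}_i\}$. Promises: a state promise made by agent $j$ to agent $i$ at time $t$ is a function $X_j^i[t]:[t,\infty)\to\mathbb{P}^{cc}(\mathcal{X}_j)$, continuous in the Hausdorff distance, conveying $x_j(t')\in X_j^i[t](t')$; promises are produced by a state promise rule $R^s_j$ (a map, continuous in the sup-over-time Hausdorff distance, from the promise information available to $j$ about itself and its neighbors to such functions), with $X_j^i[t](t)=\{x_j(t)\}$. The information of agent $i$ at time $t'$ is $X^i_{\mathcal{N}}(t')=(x_i(t'),\{X_j^i(t')\}_{j\in\mathcal{N}(i)})$, using the most recent promise. For $Y_{\mathcal{N}}\in\prod_{j\in\mathcal{N}(i)\cup\{i\}}\mathbb{P}^{cc}(\mathcal{X}_j)$ define $\mathcal{L}_iV^{sup}(Y_{\mathcal{N}})=\sup_{y_{\mathcal{N}}\in Y_{\mathcal{N}}}\nabla_iV(y_{\mathcal{N}})(A_iy_i+B_iu^{**}_i(Y_{\mathcal{N}}))$. Team-triggered law (with dwell times $T_{d,self},T_{d,event}>0$): (1) Whenever agent $i$ receives new promise(s) at time $t$, it computes $t^*=\min\{t'\ge t:\mathcal{L}_iV^{sup}(X^i_{\mathcal{N}}(t'))=0\}$,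 applies $u^{team}_i(t')=u^{**}_i(X^i_{\mathcal{N}}(t'))$ for $t'\le t^*$ and $u^{team}_i(t')=u^{sf}_i(x_i(t'))$ for $t'>t^*$ (until new information arrives), and schedules a request for information from all neighbors in $\max\{t^*-t,T_{d,self}\}$ seconds. (2) When a neighbor $j$ requests information at time $t$, agent $i$ sends it a new promise $R^s_i(\cdot)$ generated at $t$. (3) Agent $i$ monitors the promises it has made; if at time $t$, $x_i(t)\notin X_i^j(t)$ for some neighbor $j$: if $i$ sent a promise to $j$ at some $t_{last}\in(t-T_{d,event},t]$, then $i$ sends a warning message WARN to $j$ at time $t$ and sends a new promise at time $t_{last}+T_{d,event}$; otherwise it sends a new promise at time $t$. (4) When agent $i$ receives WARN from $j$ at time $t$, it redefines $X_j^i(t')=\bigcup_{z\in X_j^i(t)}\mathcal{R}_j(t'-t,z)$ for $t'\ge t$ until a new promise arrives. Communication is reliable, instantaneous and noiseless. *)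

From mathcomp Require Import all_boot all_order all_algebra.
From mathcomp Require Import all_classical all_reals all_analysis.
Unset Printing Implicit Defensive.
Import Order.TTheory GRing.Theory Num.Theory.
Import numFieldNormedType.Exports.
Local Open Scope classical_set_scope.
Local Open Scope ring_scope.

Section TeamTriggered.
Variable R : realType.

Definition pcc {k} (S : set 'cV[R]_k) : set (set 'cV[R]_k) :=
  [set Y | Y `<=` S /\ Y !=set0 /\ compact Y /\ connected Y].

Definition dist_to {k} (a : 'cV[R]_k) (B : set 'cV[R]_k) : R :=
  inf [set `|a - b| | b in B].
Definition hausdorff {k} (A B : set 'cV[R]_k) : R :=
  Num.max (sup [set dist_to a B | a in A]) (sup [set dist_to b A | b in B]).

(* z : R -> R^k is a (Caratheodory) solution of z' = A z + B v on [a,b] *)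
Definition solves {k l} (A : 'M[R]_k) (B : 'M[R]_(k, l))
    (z : R -> 'cV[R]_k) (v : R -> 'cV[R]_l) (a b : R) : Prop :=
  forall c : 'I_k,
    (@lebesgue_measure R).-integrable `[a, b]
        (fun s => ((A *m z s + B *m v s) c ord0)%:E) /\
    forall t, a <= t <= b ->
      z t c ord0 = z a c ord0 +
        Rintegral (@lebesgue_measure R) `[a, t]
          (fun s => (A *m z s + B *m v s) c ord0).

Definition reach {k l} (A : 'M[R]_k) (B : 'M[R]_(k, l)) (U : set 'cV[R]_l)
    (s : R) (y : 'cV[R]_k) : set 'cV[R]_k :=
  [set z | exists (w : R -> 'cV[R]_k) (v : R -> 'cV[R]_l),
     (forall t, 0 <= t <= s -> U (v t)) /\ w 0 = y /\
     solves A B w v 0 s /\ z = w s].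

Variable N : nat.

Record netsys := NetSys {
  adj : rel 'I_N;
  dimx : 'I_N -> nat;
  dimu : 'I_N -> nat;
  Xs : forall i, set 'cV[R]_(dimx i);
  Us : forall i, set 'cV[R]_(dimu i);
  Am : forall i, 'M[R]_(dimx i);
  Bm : forall i, 'M[R]_(dimx i, dimu i);
  usf : forall i, 'cV[R]_(dimx i) -> 'cV[R]_(dimu i) (* safe-mode controller *)
}.


Variable S : netsys.

Definition netsys_ok : Prop :=
  symmetric (adj S) /\ irreflexive (adj S) /\
  (forall i, closed (Xs S i)) /\ (forall i, closed (Us S i)) /\
  (forall i x, Xs S i x ->
     Us S i (usf S i x) /\ Am S i *m x + Bm S i *m usf S i x = 0).

Definition state := forall j : 'I_N, 'cV[R]_(dimx S j).
Definition sfam := forall j : 'I_N, set 'cV[R]_(dimx S j).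

Definition inN (i j : 'I_N) : bool := (j == i) || adj S i j.

Definition inX (x : state) : Prop := forall j, Xs S j (x j).
Definition valid_fam (Y : sfam) : Prop := forall j, pcc (Xs S j) (Y j).
Definition single (x : state) : sfam := fun j => [set x j].

Definition maxdist (x y : state) : R := \big[Num.max/0]_(j < N) `|y j - x j|.

Definition C1_with_grad (V : state -> R) (gradV : forall i, state -> 'rV[R]_(dimx S i)) :=
  (forall x : state, forall e : R, 0 < e -> exists d : R, 0 < d /\
     forall y : state, maxdist x y < d ->
       `|V y - V x - \sum_(i < N) (gradV i x *m (y i - x i)) ord0 ord0|
         <= e * maxdist x y) /\
  (forall i (x : state) (e : R), 0 < e -> exists d : R, 0 < d /\
     forall y : state, maxdist x y < d -> `|gradV i y - gradV i x| < e).

Definition bounded_below_on_X (V : state -> R) :=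
  exists c : R, forall x, inX x -> c <= V x.

(* D : set of minimizers of V over X *)
Definition minimizers (V : state -> R) : set state :=
  [set x | inX x /\ forall y, inX y -> V x <= V y].

Definition grad_distributed (gradV : forall i, state -> 'rV[R]_(dimx S i)) :=
  forall i (x y : state), (forall j, inN i j -> x j = y j) -> gradV i x = gradV i y.

Definition ctrl := forall i, sfam -> 'cV[R]_(dimu S i).

Definition ctrl_continuous (ustar : ctrl) :=
  forall Y, valid_fam Y -> forall e : R, 0 < e -> exists d : R, 0 < d /\
    forall Z, valid_fam Z -> (forall j, hausdorff (Y j) (Z j) < d) ->
      forall i, `|ustar i Y - ustar i Z| < e.

Definition ctrl_distributed (ustar : ctrl) :=
  forall i (Y Z : sfam), (forall j, inN i j -> Y j = Z j) -> ustar i Y = ustar i Z.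

Definition lie (gradV : forall i, state -> 'rV[R]_(dimx S i)) (ustar : ctrl)
    i (y : state) (Y : sfam) : R :=
  (gradV i y *m (Am S i *m y i + Bm S i *m ustar i Y)) ord0 ord0.

Definition LVsup gradV ustar i (Y : sfam) : R :=
  sup [set lie gradV ustar i y Y | y in [set y : state | forall j, inN i j -> Y j (y j)]].

Definition ctrl_decreasing (V : state -> R) gradV (ustar : ctrl) :=
  forall x : state, inX x -> ~ minimizers V x ->
    (forall i, lie gradV ustar i x (single x) <= 0) /\
    \sum_(i < N) lie gradV ustar i x (single x) < 0.

(* Rs j t Y : the promise function [t, oo) -> sets, generated by j at time t
   from its information Y (own state and promises about its neighbors). *)
Definition promrule := forall j, R -> sfam -> R -> set 'cV[R]_(dimx S j).

Definition promrule_ok (Rs : promrule) :=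
  (forall j t Y, valid_fam Y -> forall t', t <= t' -> pcc (Xs S j) (Rs j t Y t')) /\
  (forall j t (Y : sfam) z, Y j = [set z] -> Rs j t Y t = [set z]) /\
  (forall j t Y, valid_fam Y -> forall t', t <= t' -> forall e : R, 0 < e ->
     exists d : R, 0 < d /\ forall t'', t <= t'' -> `|t'' - t'| < d ->
       hausdorff (Rs j t Y t') (Rs j t Y t'') < e) /\
  (forall j t Y, valid_fam Y -> forall e : R, 0 < e -> exists d : R, 0 < d /\
     forall Z, valid_fam Z -> (forall k, hausdorff (Y k) (Z k) < d) ->
       forall t', t <= t' -> hausdorff (Rs j t Y t') (Rs j t Z t') <= e) /\
  (forall j t (Y Z : sfam), (forall k, inN j k -> Y k = Z k) -> Rs j t Y = Rs j t Z).

Record exec := Exec {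
  xs : forall i, R -> 'cV[R]_(dimx S i);
  us : forall i, R -> 'cV[R]_(dimu S i);
  held : forall i j : 'I_N, R -> set 'cV[R]_(dimx S j);
  prom : forall j, R -> R -> set 'cV[R]_(dimx S j); (* promise generated by j at time s *)
  sendP : 'I_N -> 'I_N -> set R;   (* sendP i j t : i sends a promise to j at t *)
  sendW : 'I_N -> 'I_N -> set R;   (* sendW i j t : i sends WARN to j at t *)
  sendQ : 'I_N -> 'I_N -> set R    (* sendQ i j t : i requests information from j at t *)
}.


Variable E : exec.

Definition isLast (T : set R) (t s : R) : Prop :=
  T s /\ s <= t /\ forall s', T s' -> s' <= t -> s' <= s.

(* information X^i_N(t); non-neighbour components are irrelevant
   (u** and R^s are distributed) and set to the true states *)
Definition info i (t : R) : sfam :=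
  fun k => if adj S i k then held E i k t else [set xs E k t].

(* times at which agent i receives new promises (time 0 = initialisation) *)
Definition Rcv i : set R := [set t | t = 0 \/ exists j, sendP E j i t].

(* the value X_j^i(t) given by the law: most recent promise, or its
   reachable-set expansion after a WARN *)
Definition held_law i j (t : R) : set 'cV[R]_(dimx S j) :=
  [set y | exists s, isLast (sendP E j i) t s /\
     ((exists w, sendW E j i w /\ s <= w <= t /\
         exists z, prom E j s w z /\ reach (Am S j) (Bm S j) (Us S j) (t - w) z y)
      \/ ((forall w, sendW E j i w -> ~ (s <= w <= t)) /\ prom E j s t y))].

(* the promise made by i to j at time s is first broken (detected) at b *)
Definition broken i j (s b : R) : Prop :=
  sendP E i j s /\ s <= b /\ (forall t, s < t < b -> ~ sendP E i j t) /\
  (forall t, s <= t < b -> prom E i s t (xs E i t)) /\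
  (forall e : R, 0 < e -> exists t, b <= t < b + e /\ ~ prom E i s t (xs E i t)).

Variables (Rs : promrule) (ustar : ctrl)
          (gradV : forall i, state -> 'rV[R]_(dimx S i)) (Ts Te : R).

Definition LV i t := LVsup gradV ustar i (info i t).

(* request time r scheduled after the reception at tau:
   r = tau + max (t* - tau, Ts), t* = min {t >= tau | LV = 0} *)
Definition reqTime i (tau r : R) : Prop :=
  (r = tau + Ts /\ exists s, tau <= s <= tau + Ts /\ LV i s = 0) \/
  (tau + Ts < r /\ LV i r = 0 /\ forall s, tau <= s < r -> LV i s <> 0).

Definition eventP i j (t : R) : Prop :=
  exists s b, broken i j s b /\
    ((b < s + Te /\ t = s + Te) \/ (s + Te <= b /\ t = b)).

Definition exec_ok : Prop :=
  (forall i t, 0 <= t -> solves (Am S i) (Bm S i) (xs E i) (us E i) 0 t) /\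
  (forall i t, 0 <= t -> Xs S i (xs E i t)) /\
  (forall i j t, adj S i j -> 0 <= t -> held E i j t = held_law i j t) /\
  (forall j s, (exists i, sendP E j i s) -> prom E j s = Rs j s (info j s)) /\
  (forall i t tau, 0 <= t -> isLast (Rcv i) t tau ->
     ((forall s, tau <= s < t -> LV i s <> 0) -> us E i t = ustar i (info i t)) /\
     (~ (forall s, tau <= s < t -> LV i s <> 0) -> us E i t = usf S i (xs E i t))) /\
  (forall i j r, sendQ E i j r <->
     adj S i j /\ 0 <= r /\
     exists tau, Rcv i tau /\ tau < r /\ (forall s, tau < s < r -> ~ Rcv i s) /\
                 reqTime i tau r) /\
  (forall i j t, sendP E i j t <->
     adj S i j /\ 0 <= t /\ (t = 0 \/ sendQ E j i t \/ eventP i j t)) /\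
  (forall i j w, sendW E i j w <-> adj S i j /\ exists s, broken i j s w /\ w < s + Te).

(* switching times of agent i's control law: receptions of new information,
   and the switch to safe mode right after t* *)
Definition safe_switch i (t : R) : Prop :=
  exists tau, isLast (Rcv i) t tau /\ LV i t = 0 /\ forall s, tau <= s < t -> LV i s <> 0.

Definition no_zeno : Prop :=
  forall i (a b : R),
    finite_set [set t | a <= t <= b /\
       exists j, sendP E j i t \/ sendW E j i t \/ sendQ E j i t] /\
    finite_set [set t | a <= t <= b /\ (Rcv i t \/ safe_switch i t)].

End TeamTriggered.

From mathcomp Require Import all_boot all_order all_algebra.
From mathcomp Require Import all_classical all_reals all_analysis.
From mathcomp Require Import lra.
Import Order.TTheory GRing.Theory Num.Theory.
Import numFieldNormedType.Exports.
Local Open Scope classical_set_scope.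
Local Open Scope ring_scope.

(* Only the dwell times matter.  Two requests of an agent are at least [Ts]
   apart, since the later one is scheduled [Ts] or more after the last
   reception, and the earlier one is itself a reception.  A promise along an
   edge is sent at time 0, on a request, or on an event, and an event comes
   at least [Te] after the promise it is triggered by, which it determines;
   so the promises up to [b] are, apart from finitely many, images of the
   promises up to [b - Te], and induction on [b] in steps of [Te] gives
   finiteness.  Warnings and switches of the control law are in turn
   determined by the promise or the reception they follow. *)

Lemma finite_set_by_steps (R : realType) (T : Type) (F : R -> set T) (d : R) :
  0 < d ->
  (forall b, b < 0 -> finite_set (F b)) ->
  (forall b, finite_set (F (b - d)) -> finite_set (F b)) ->
  forall b, finite_set (F b).
Proof.
move=> d_gt0 F_neg F_step b.
have [b_lt0|b_ge0] := ltrP b 0; first exact: F_neg.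
have [n bn] : exists n : nat, b / d < n%:R.
  by eexists; apply: archi_boundP; rewrite divr_ge0 // ltW.
elim: n b {b_ge0} bn => [|n IHn] b bn.
  by apply: F_neg; move: bn; rewrite ltr_pdivrMr // mul0r.
apply: F_step; apply: IHn.
by rewrite mulrBl divff ?gt_eqF //; move: bn; rewrite -natr1; lra.
Qed.

Lemma subsingleton_finite_set (T : Type) (A : set T) :
  (forall x y, A x -> A y -> x = y) -> finite_set A.
Proof.
move=> A_sub; have [[x Ax]|A0] := pselect (exists x, A x).
  by apply: (sub_finite_set _ (finite_set1 x)) => y Ay; apply: A_sub.
by apply: (sub_finite_set _ (finite_set0 T)) => y Ay; apply: A0; exists y.
Qed.

Lemma finite_set_functional_image (T U : Type) (A : set T) (F : T -> U -> Prop) :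
  finite_set A -> (forall s t1 t2, A s -> F s t1 -> F s t2 -> t1 = t2) ->
  finite_set [set t | exists2 s, A s & F s t].
Proof.
move=> finA F_fun.
apply: (sub_finite_set (B := \bigcup_(s in A) [set t | F s t])).
  by move=> t [s As Fst]; exists s.
apply: bigcup_finite => // s As.
by apply: subsingleton_finite_set => t1 t2; apply: F_fun.
Qed.

Lemma separated_finite_set (R : realType) (Q : set R) (d : R) : 0 < d ->
  (forall r, Q r -> 0 <= r) ->
  (forall r r', Q r -> Q r' -> r < r' -> r + d <= r') ->
  forall b, finite_set [set r | r <= b /\ Q r].
Proof.
move=> d_gt0 Q_ge0 Q_sep.
apply: (@finite_set_by_steps R R (fun b => [set r | r <= b /\ Q r]) d d_gt0).
  move=> b b_lt0; apply: (sub_finite_set _ (finite_set0 R)) => r [rb Qr].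
  by have := Q_ge0 _ Qr; lra.
move=> b fin_bd.
have fin_window : finite_set [set r | b - d < r <= b /\ Q r].
  apply: subsingleton_finite_set => x y [/andP[x1 x2] Qx] [/andP[y1 y2] Qy].
  have [xy|yx|//] := ltgtP x y.
  - by have := Q_sep _ _ Qx Qy xy; lra.
  - by have := Q_sep _ _ Qy Qx yx; lra.
apply: (sub_finite_set (B := [set r | r <= b - d /\ Q r] `|`
                              [set r | b - d < r <= b /\ Q r])).
  by move=> r [rb Qr]; have [h|h] := leP r (b - d); [left|right; split=> //; apply/andP].
by rewrite finite_setU.
Qed.

Lemma broken_functional {R : realType} {N : nat} {S : netsys R N} {E : exec R N S}
    {i j s b1 b2} :
  broken R N S E i j s b1 -> broken R N S E i j s b2 -> b1 = b2.
Proof.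
move=> [_ [sb1 [_ [kept1 fail1]]]] [_ [sb2 [_ [kept2 fail2]]]].
have [b12|b21|//] := ltgtP b1 b2; exfalso.
- have [t [/andP[t1 t2] nt]] := fail1 (b2 - b1) (ltac:(by rewrite subr_gt0)).
  by apply: nt; apply: kept2; apply/andP; split; [exact: le_trans sb1 t1|lra].
- have [t [/andP[t1 t2] nt]] := fail2 (b1 - b2) (ltac:(by rewrite subr_gt0)).
  by apply: nt; apply: kept1; apply/andP; split; [exact: le_trans sb2 t1|lra].
Qed.

Section Messages.
Variables (R : realType) (N : nat) (S : netsys R N) (E : exec R N S)
          (ustar : ctrl R N S) (gradV : forall i : 'I_N, state R N S -> 'rV[R]_(dimx R N S i))
          (Ts Te : R).

Local Notation sendP := (sendP R N S E).
Local Notation sendW := (sendW R N S E).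
Local Notation sendQ := (sendQ R N S E).
Local Notation Rcv := (Rcv R N S E).
Local Notation broken := (broken R N S E).

Hypothesis adj_sym : symmetric (adj R N S).
Hypothesis Ts_gt0 : 0 < Ts.
Hypothesis Te_gt0 : 0 < Te.
Hypothesis sendQP : forall i j r, sendQ i j r <->
  adj R N S i j /\ 0 <= r /\
  exists tau, Rcv i tau /\ tau < r /\ (forall s, tau < s < r -> ~ Rcv i s) /\
              reqTime R N S E ustar gradV Ts i tau r.
Hypothesis sendPP : forall i j t, sendP i j t <->
  adj R N S i j /\ 0 <= t /\ (t = 0 \/ sendQ j i t \/ eventP R N S E Te i j t).
Hypothesis sendWP : forall i j w, sendW i j w <->
  adj R N S i j /\ exists s, broken i j s w /\ w < s + Te.

Lemma sendQ_Rcv i j r : sendQ i j r -> Rcv i r.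
Proof.
move=> Qr; have [aij [r_ge0 _]] := (sendQP i j r).1 Qr.
by right; exists j; apply/sendPP; rewrite adj_sym; split=> //; split=> //; right; left.
Qed.

Lemma sendQ_separated i j j' r r' :
  sendQ i j r -> sendQ i j' r' -> r < r' -> r + Ts <= r'.
Proof.
move=> Qr /sendQP [_ [_ [tau [_ [_ [noRcv req]]]]]] rr'.
have r_le_tau : r <= tau.
  rewrite leNgt; apply/negP => tau_r.
  by apply: (noRcv r); [rewrite tau_r rr' | exact: sendQ_Rcv Qr].
by case: req => [[-> _]|[tau_r' _]]; lra.
Qed.

Lemma sendQ_finite i b : finite_set [set r | r <= b /\ exists j, sendQ i j r].
Proof.
apply: (@separated_finite_set R (fun r => exists j, sendQ i j r) Ts Ts_gt0).
  by move=> r [j /sendQP [_ []]].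
by move=> r r' [j Qr] [j' Qr']; apply: sendQ_separated Qr Qr'.
Qed.

(* [eventP i j t] unfolds to [exists s, event_after i j s t]. *)
Definition event_after i j s t :=
  exists bb, broken i j s bb /\
    ((bb < s + Te /\ t = s + Te) \/ (s + Te <= bb /\ t = bb)).

Lemma event_after_functional i j s t1 t2 :
  event_after i j s t1 -> event_after i j s t2 -> t1 = t2.
Proof.
move=> [b1 [B1 t1E]] [b2 [B2 t2E]].
have b12 := broken_functional B1 B2; subst b2.
by case: t1E t2E => [[? ?]|[? ?]] [[? ?]|[? ?]]; lra.
Qed.

Lemma event_after_dwell {i j s t} :
  event_after i j s t -> sendP i j s /\ s + Te <= t.
Proof. by move=> [bb [[Ps _] tE]]; split=> //; case: tE => [[? ?]|[? ?]]; lra. Qed.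

Lemma sendP_finite i j b : finite_set [set t | t <= b /\ sendP i j t].
Proof.
move: b; apply: (@finite_set_by_steps R R (fun b => [set t | t <= b /\ sendP i j t]) Te Te_gt0).
  by move=> b b_lt0; apply: (sub_finite_set _ (finite_set0 R)) => t [tb /sendPP [_ []]]; lra.
move=> b fin_prev.
have fin_events : finite_set
    [set t | exists2 s, s <= b - Te /\ sendP i j s & event_after i j s t].
  apply: finite_set_functional_image fin_prev _ => s t1 t2 _.
  exact: event_after_functional.
apply: (sub_finite_set (B := [set 0] `|` [set r | r <= b /\ exists l, sendQ j l r]
    `|` [set t | exists2 s, s <= b - Te /\ sendP i j s & event_after i j s t])).
  move=> t [tb /sendPP [_ [_ [->|[Qt|[s Es]]]]]].
  - by left; left.
  - by left; right; split=> //; exists i.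
  - by right; exists s => //; have [Ps st] := event_after_dwell Es; split=> //; lra.
by rewrite !finite_setU; split; [split=> //; exact: sendQ_finite|].
Qed.

Lemma sendW_finite i j b : finite_set [set w | w <= b /\ sendW i j w].
Proof.
have fin_broken : finite_set [set w | exists2 s, s <= b /\ sendP i j s & broken i j s w].
  apply: finite_set_functional_image (sendP_finite i j b) _ => s w1 w2 _.
  exact: broken_functional.
apply: (sub_finite_set _ fin_broken) => w [wb /sendWP [_ [s [Bw _]]]].
by exists s => //; split; [have := Bw.2.1; lra | exact: Bw.1].
Qed.

Lemma Rcv_finite i b : finite_set [set t | t <= b /\ Rcv i t].
Proof.
apply: (sub_finite_set (B := [set 0] `|`
    \bigcup_(j in [set: 'I_N]) [set t | t <= b /\ sendP j i t])).
  by move=> t [tb [->|[j Pt]]]; [left | right; exists j].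
rewrite finite_setU; split=> //.
by apply: bigcup_finite => [|j _]; [exact: finite_finset | exact: sendP_finite].
Qed.

Lemma safe_switch_finite i b :
  finite_set [set t | t <= b /\ safe_switch R N S E ustar gradV i t].
Proof.
pose LVi := LV R N S E ustar gradV i.
pose first_zero tau t := isLast R (Rcv i) t tau /\ LVi t = 0 /\
  forall s, tau <= s < t -> LVi s <> 0.
have fin_switch : finite_set [set t | exists2 tau, tau <= b /\ Rcv i tau & first_zero tau t].
  apply: finite_set_functional_image (Rcv_finite i b) _.
  move=> tau t1 t2 _ [[_ [tau1 _]] [z1 nz1]] [[_ [tau2 _]] [z2 nz2]].
  have [t12|t21|//] := ltgtP t1 t2; exfalso.
  - by apply: (nz2 t1) => //; rewrite tau1 t12.
  - by apply: (nz1 t2) => //; rewrite tau2 t21.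
apply: (sub_finite_set _ fin_switch) => t [tb [tau [L zero]]].
by exists tau; [split; [have := L.2.1; lra | exact: L.1] | split].
Qed.

Lemma no_zeno_of_dwell_times : no_zeno R N S E ustar gradV.
Proof.
move=> i a b; split.
  apply: (sub_finite_set (B := \bigcup_(j in [set: 'I_N])
      ([set t | t <= b /\ sendP j i t] `|` [set w | w <= b /\ sendW j i w]
       `|` [set r | r <= b /\ exists l, sendQ j l r]))).
    move=> t [/andP[_ tb] [j msg]]; exists j => //.
    by case: msg => [Pt|[Wt|Qt]]; [left; left|left; right|right; split=> //; exists i].
  apply: bigcup_finite => [|j _]; first exact: finite_finset.
  rewrite !finite_setU; split; [split|].
  - exact: sendP_finite.
  - exact: sendW_finite.
  - exact: sendQ_finite.
apply: (sub_finite_set (B := [set t | t <= b /\ Rcv i t] `|`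
                             [set t | t <= b /\ safe_switch R N S E ustar gradV i t])).
  by move=> t [/andP[_ tb] [Rt|St]]; [left|right].
rewrite finite_setU; split.
- exact: Rcv_finite.
- exact: safe_switch_finite.
Qed.

End Messages.

Theorem lemma5p4 (R : realType) (N : nat) (S : netsys R N)
  (V : state R N S -> R) (gradV : forall i : 'I_N, state R N S -> 'rV[R]_(dimx R N S i))
  (ustar : ctrl R N S) (Rs : promrule R N S) (Ts Te : R) :
  netsys_ok R N S ->
  C1_with_grad R N S V gradV ->
  bounded_below_on_X R N S V ->
  grad_distributed R N S gradV ->
  ctrl_continuous R N S ustar ->
  ctrl_distributed R N S ustar ->
  ctrl_decreasing R N S V gradV ustar ->
  promrule_ok R N S Rs ->
  0 < Ts -> 0 < Te ->
  forall E : exec R N S,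
    exec_ok R N S E Rs ustar gradV Ts Te ->
    no_zeno R N S E ustar gradV.
Proof.
move=> [adj_sym _] _ _ _ _ _ _ _ Ts_gt0 Te_gt0 E [_ [_ [_ [_ [_ [sendQP [sendPP sendWP]]]]]]].
exact: (@no_zeno_of_dwell_times R N S E ustar gradV Ts Te
          adj_sym Ts_gt0 Te_gt0 sendQP sendPP sendWP).
Qed.
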